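(* Let $T$ be a finite tree with $m$ interior edges, and let $\mathcal{S}$ be the collection of all subtrees of $T$ that have exactly one interior edge. Then $$\sum_{S\in\mathcal{S}}(-1)^{|S|}=-m,$$ where $|S|$ denotes the number of edges of $S$.
   Context: A subtree of $T$ is a nonempty connected subgraph of $T$, identified with its (nonempty) edge set. An edge of a subtree $S$ is a leaf (edge) of $S$ if one of its endpoints has degree $1$ in $S$; an edge of $S$ is interior in $S$ if it is not a leaf of $S$. An interior edge of $T$ is an edge of $T$ that is interior in $T$ itself, i.e. neither endpoint is a leaf vertex of $T$. *)

From mathcomp Require Import all_boot all_order all_algebra.
Set Implicit Arguments. Unset Strict Implicit. Unset Printing Implicit Defensive.

(* A finite graph on vertex type V : finType with adjacency relation e.
   Edges are identified with 2-element vertex sets {x, y}. *)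
Section Tree.
Variable V : finType.

Definition edgeset (e : rel V) : {set {set V}} :=
  [set E : {set V} | [exists x, exists y, e x y && (E == [set x; y])]].

Definition is_tree (e : rel V) : Prop :=
  [/\ symmetric e, irreflexive e,
      (forall x y : V, connect e x y) &
      (forall c : seq V, uniq c -> 2 < size c -> ~~ cycle e c)].

Definition verts (S : {set {set V}}) : {set V} := \bigcup_(E in S) E.

Definition deg (S : {set {set V}}) (v : V) : nat := #|[set E in S | v \in E]|.

Definition leaf_in (S : {set {set V}}) (E : {set V}) : bool :=
  (E \in S) && [exists v in E, deg S v == 1].

Definition interior_in (S : {set {set V}}) (E : {set V}) : bool :=
  (E \in S) && ~~ leaf_in S E.

Definition interior_edges (S : {set {set V}}) : {set {set V}} :=
  [set E in S | interior_in S E].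

Definition subtree (e : rel V) (S : {set {set V}}) : bool :=
  [&& S != set0, S \subset edgeset e &
      [forall x in verts S, forall y in verts S,
          connect [rel a b | [set a; b] \in S] x y]].

End Tree.

From mathcomp Require Import all_boot all_order all_algebra zify.
Import GRing.Theory.
Set Implicit Arguments. Unset Strict Implicit. Unset Printing Implicit Defensive.

(* Group the subtrees by their interior edge f = {u, v}, which is then interior
   in T.  A subtree has f as its only interior edge iff it contains f, has
   another edge at u and another at v, and all its edges meet f; acyclicity is
   what makes every edge other than f a leaf.  Toggling a fixed edge a of T at u
   (not at v) and an edge b at v (not at u) are sign-reversing involutions that
   reduce the signed count of these edge sets to that of {f} alone, i.e. -1. *)

Definition toggle (T : finType) (z : T) (S : {set T}) : {set T} :=
  if z \in S then S :\ z else z |: S.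

Section Toggle.
Local Open Scope ring_scope.
Variable T : finType.
Implicit Types (z x : T) (S X : {set T}).

Lemma toggleK z : involutive (toggle z).
Proof.
move=> S; rewrite {2}/toggle; case: ifP => zS; rewrite /toggle.
  by rewrite setD11 setD1K.
by rewrite setU11 setU1K ?zS.
Qed.

Lemma mem_toggle_neq z S x : x != z -> (x \in toggle z S) = (x \in S).
Proof. by move=> xz; rewrite /toggle; case: ifP; rewrite !inE (negbTE xz). Qed.

Lemma subset_toggle z S X : z \in X -> (toggle z S \subset X) = (S \subset X).
Proof.
move=> zX; apply/subsetP/subsetP => sub x; case: (eqVneq x z) => [-> //|xz].
  by rewrite -(mem_toggle_neq S xz); apply: sub.
by rewrite mem_toggle_neq //; apply: sub.
Qed.

Lemma sign_toggle z S : (-1 : int) ^+ #|toggle z S| = - (-1) ^+ #|S|.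
Proof.
rewrite /toggle; case: ifP => zS; last by rewrite cardsU1 zS exprS mulN1r.
by rewrite [in RHS](cardsD1 z S) zS exprS mulN1r opprK.
Qed.

Lemma sum_sign_toggle_invariant (P : pred {set T}) z :
  (forall S, P (toggle z S) = P S) -> \sum_(S | P S) (-1 : int) ^+ #|S| = 0.
Proof.
move=> Pz; set s := (X in X = 0).
have : s = - s.
  rewrite {1}/s (reindex_inj (inv_inj (toggleK z))) /= -sumrN.
  by apply: eq_big => [S|S _]; rewrite ?Pz ?sign_toggle.
lia.
Qed.

Lemma sum_sign_toggle2 (P A B : pred {set T}) a b :
  (forall S, P (toggle a S) = P S) -> (forall S, B (toggle a S) = B S) ->
  (forall S, P (toggle b S) = P S) -> (forall S, A (toggle b S) = A S) ->
  \sum_(S | [&& P S, A S & B S]) (-1 : int) ^+ #|S| =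
  \sum_(S | [&& P S, ~~ A S & ~~ B S]) (-1 : int) ^+ #|S|.
Proof.
move=> Pa Ba Pb Ab.
have sumB : \sum_(S | P S && B S) (-1 : int) ^+ #|S| = 0.
  by apply: (sum_sign_toggle_invariant (z := a)) => S; rewrite Pa Ba.
have sumA : \sum_(S | P S && ~~ A S) (-1 : int) ^+ #|S| = 0.
  by apply: (sum_sign_toggle_invariant (z := b)) => S; rewrite Pb Ab.
rewrite (bigID A) /= in sumB; rewrite (bigID B) /= in sumA.
have eqAB : \sum_(S | P S && B S && ~~ A S) (-1 : int) ^+ #|S| =
            \sum_(S | P S && ~~ A S && B S) (-1 : int) ^+ #|S|.
  by apply: eq_bigl => S; rewrite andbAC.
rewrite (eq_bigl (fun S => P S && B S && A S)); last by move=> S; rewrite andbA andbAC.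
rewrite [RHS](eq_bigl (fun S => P S && ~~ A S && ~~ B S)); last by move=> S; rewrite andbA.
apply: (addrI (\sum_(S | P S && B S && ~~ A S) (-1 : int) ^+ #|S|)).
by rewrite addrC sumB eqAB sumA.
Qed.
End Toggle.

Section Subtrees.
Variable V : finType.
Implicit Types (e : rel V) (u v w x y z : V) (E f : {set V}) (S X : {set {set V}}).

Lemma edgesetP e E : reflect (exists x y, e x y /\ E = [set x; y]) (E \in edgeset e).
Proof.
rewrite inE; apply: (iffP existsP) => [[x /existsP [y /andP [exy /eqP ->]]]|].
  by exists x, y.
case=> x [y [exy ->]].
by exists x; apply/existsP; exists y; rewrite exy eqxx.
Qed.

Lemma edgeset_eq2 e E y z :
  E \in edgeset e -> y \in E -> z \in E -> y != z -> E = [set y; z].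
Proof.
case/edgesetP => [p [q [_ ->]]]; rewrite !inE.
by case/orP => /eqP -> /orP [] /eqP -> //; rewrite ?eqxx // setUC.
Qed.

Lemma edgeset_rel e E y z : symmetric e ->
  E \in edgeset e -> y \in E -> z \in E -> y != z -> e y z.
Proof.
move=> sym /edgesetP [p [q [epq ->]]]; rewrite !inE.
by case/orP => /eqP -> /orP [] /eqP -> //; rewrite ?eqxx // sym.
Qed.

Lemma deg_gt1 S E1 E2 w :
  E1 \in S -> E2 \in S -> E1 != E2 -> w \in E1 -> w \in E2 -> 1 < deg S w.
Proof.
move=> E1S E2S E12 wE1 wE2.
have : [set E1; E2] \subset [set E in S | w \in E].
  by apply/subsetP => E; rewrite !inE => /orP [] /eqP ->; apply/andP.
by move/subset_leq_card; rewrite cards2 E12.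
Qed.

Lemma deg_neq1_other_edge S E w : E \in S -> w \in E -> deg S w != 1 ->
  exists2 E', E' \in S & (E' != E) && (w \in E').
Proof.
move=> ES wE deg_w.
have [/exists_inP [E' E'S other]|/exists_inPn none] :=
  boolP [exists E' in S, (E' != E) && (w \in E')]; first by exists E'.
case/eqP: deg_w; apply/eqP/cards1P; exists E; apply/setP => E'; rewrite !inE.
apply/andP/eqP => [[E'S wE']|->//]; apply/eqP.
by move: (none E' E'S); rewrite wE' andbT negbK.
Qed.

Lemma deg1_edge_eq S E E' w :
  deg S w = 1 -> E \in S -> E' \in S -> w \in E -> w \in E' -> E' = E.
Proof.
move=> /eqP deg_w ES E'S wE wE'; move: deg_w; apply: contraTeq => E'E.
by rewrite gtn_eqF // (deg_gt1 E'S ES E'E).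
Qed.

Lemma deg_toggle S E w : w \notin E -> deg (toggle E S) w = deg S w.
Proof.
move=> wE; apply: eq_card => E'; rewrite !inE.
by case: (eqVneq E' E) => [->|E'E]; rewrite ?(negbTE wE) ?andbF ?mem_toggle_neq.
Qed.

Lemma interior_edgesE S E :
  (E \in interior_edges S) = (E \in S) && [forall w in E, deg S w != 1].
Proof.
rewrite !inE /interior_in /leaf_in andbA andbb.
by case: (E \in S) => //=; rewrite negb_exists_in.
Qed.

Lemma interior_edges2 S u v : ([set u; v] \in interior_edges S) =
  [&& [set u; v] \in S, deg S u != 1 & deg S v != 1].
Proof.
rewrite interior_edgesE; congr (_ && _); apply/forall_inP/andP => [deg_uv|[]].
  by rewrite !deg_uv ?set21 ?set22.
by move=> deg_u deg_v w; rewrite !inE => /orP [] /eqP ->.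
Qed.

Lemma interior_edges_subset S X :
  S \subset X -> {subset interior_edges S <= interior_edges X}.
Proof.
move=> SX E; rewrite !interior_edgesE => /andP [ES /forall_inP deg_E].
rewrite (subsetP SX) //=; apply/forall_inP => w wE.
have [E' E'S /andP [E'E wE']] := deg_neq1_other_edge ES wE (deg_E w wE).
by rewrite gtn_eqF // (deg_gt1 (subsetP SX _ E'S) (subsetP SX _ ES) E'E).
Qed.

Lemma interior_edges_sub S : interior_edges S \subset S.
Proof. by apply/subsetP => E; rewrite inE => /andP []. Qed.

Lemma pendant_edge_eq S f w x E :
  interior_edges S = [set f] -> w \in f -> x \notin f -> [set x; w] \in S ->
  E \in S -> x \in E -> E = [set x; w].
Proof.
move=> IS wf xf xwS ES xE; apply/eqP; apply: contraNT xf => Exw.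
have [<-|xwf] := eqVneq [set x; w] f; first by rewrite set21.
have fS : f \in S by rewrite (subsetP (interior_edges_sub S)) // IS set11.
suff : [set x; w] \in interior_edges S by rewrite IS inE (negbTE xwf).
rewrite interior_edges2 xwS !gtn_eqF //.
  by apply: (deg_gt1 xwS fS); rewrite ?set22.
by apply: (deg_gt1 xwS ES); rewrite 1?eq_sym ?set21.
Qed.

Lemma unique_interior_edge_meets e S f E :
  subtree e S -> interior_edges S = [set f] -> E \in S -> ~~ [disjoint E & f].
Proof.
move=> /and3P [_ /subsetP Se /forall_inP Sconn] IS ES; apply/negP => disj_Ef.
have fS : f \in S by rewrite (subsetP (interior_edges_sub S)) // IS set11.
have [w [? [_ fww']]] := edgesetP _ _ (Se f fS).
have [p [? [_ Epp']]] := edgesetP _ _ (Se E ES).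
have wf : w \in f by rewrite fww' set21.
have pE : p \in E by rewrite Epp' set21.
pose W := [pred z | (z \in f) || [exists w in f, [set z; w] \in S]].
have adj_sym : connect_sym [rel a b | [set a; b] \in S].
  by apply: sym_connect_sym => a b /=; rewrite setUC.
have W_closed : closed [rel a b | [set a; b] \in S] W.
  apply: intro_closed => // z z' /= zz'S; have [zf _|zf] := boolP (z \in f).
    by apply/orP; right; apply/exists_inP; exists z; rewrite // setUC.
  rewrite !inE (negbTE zf) => /exists_inP [w0 w0f zw0S].
  have := set22 z z'; rewrite (pendant_edge_eq IS w0f zf zw0S zz'S (set21 z z')).
  rewrite !inE => /orP [] /eqP ->; last by rewrite w0f.
  by apply/orP; right; apply/exists_inP; exists w0.
have Wp : p \in W.
  have [wS pS] : w \in verts S /\ p \in verts S.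
    by split; apply/bigcupP; [exists f | exists E].
  by rewrite -(closed_connect W_closed (forall_inP (Sconn w wS) p pS)) inE wf.
have pf : p \notin f by rewrite (disjointFr disj_Ef pE).
move: Wp; rewrite inE (negbTE pf) => /exists_inP [w0 w0f pw0S].
rewrite (pendant_edge_eq IS w0f pf pw0S ES pE) in disj_Ef.
by rewrite (disjointFr disj_Ef (set22 p w0)) in w0f.
Qed.

Definition double_star e u v : {set {set V}} :=
  [set E in edgeset e | (u \in E) || (v \in E)].

Lemma double_starC e u v : double_star e u v = double_star e v u.
Proof. by apply/setP => E; rewrite !inE orbC. Qed.

Lemma double_star_edgeset e u v : double_star e u v \subset edgeset e.
Proof. by apply/subsetP => E; rewrite inE => /andP []. Qed.

Lemma tree_no_triangle e x y z : is_tree e -> e x y -> e y z -> e z x -> False.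
Proof.
case=> _ irr _ acyc exy eyz ezx.
have neq a b : e a b -> a != b by apply: contraTneq => ->; rewrite irr.
have uniq_xyz : uniq [:: x; y; z].
  by rewrite /= !inE negb_or (neq _ _ exy) (neq _ _ eyz) eq_sym (neq _ _ ezx).
by move: (acyc _ uniq_xyz isT); rewrite /= exy eyz ezx.
Qed.

Lemma double_star_leaf e u v S E : is_tree e -> e u v ->
  S \subset double_star e u v -> E \in S -> E != [set u; v] ->
  E \notin interior_edges S.
Proof.
move=> tree; have [sym irr _ _] := tree.
wlog uE : u v / u \in E => [wlog_u euv sub ES Ef|].
  have := subsetP sub E ES; rewrite inE => /andP [_ /orP [uE|vE]].
    exact: (wlog_u u v).
  by apply: (wlog_u v u); rewrite 1?sym // 1?double_starC // setUC.
move=> euv /subsetP sub ES Ef.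
have Ee : E \in edgeset e by have := sub E ES; rewrite inE => /andP [].
have [x xE xu] : exists2 x, x \in E & x != u.
  have [p [q [epq Epq]]] := edgesetP _ _ Ee.
  have [pu|pu] := eqVneq p u; last by exists p; rewrite // Epq set21.
  exists q; first by rewrite Epq set22.
  by rewrite -pu eq_sym; apply: contraTneq epq => ->; rewrite irr.
have ux : u != x by rewrite eq_sym.
have Eux : E = [set u; x] := edgeset_eq2 Ee uE xE ux.
have xv : x != v by apply: contraNneq Ef => xv; rewrite Eux xv.
rewrite interior_edgesE ES /=; apply/forall_inP => /(_ x xE); apply/negP; rewrite negbK.
apply/cards1P; exists E; apply/setP => E'; rewrite !inE.
apply/andP/eqP => [[E'S xE']|->]; last by rewrite ES xE.
have := sub E' E'S; rewrite inE => /andP [E'e /orP [uE'|vE']].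
  by rewrite Eux; apply: edgeset_eq2 E'e uE' xE' ux.
case: (tree_no_triangle tree (edgeset_rel sym Ee uE xE ux)
  (edgeset_rel sym E'e xE' vE' xv)); by rewrite sym.
Qed.

Lemma subtree_double_star e u v S :
  [set u; v] \in S -> S \subset double_star e u v -> subtree e S.
Proof.
move=> fS sub; have /subsetP Se := subset_trans sub (double_star_edgeset e u v).
pose r := [rel a b | [set a; b] \in S].
have r_sym : connect_sym r by apply: sym_connect_sym => a b /=; rewrite setUC.
have edge_connect E y z : E \in S -> y \in E -> z \in E -> connect r y z.
  move=> ES yE zE; have [->|yz] := eqVneq y z; first exact: connect0.
  by apply: connect1; rewrite /= -(edgeset_eq2 (Se E ES) yE zE yz).
have connect_u y : y \in verts S -> connect r y u.
  case/bigcupP => E ES yE.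
  have := subsetP sub E ES; rewrite inE => /andP [_ /orP [uE|vE]].
    exact: edge_connect ES yE uE.
  apply: connect_trans (edge_connect _ _ _ ES yE vE) _.
  exact: edge_connect fS (set22 u v) (set21 u v).
apply/and3P; split; first by apply/set0Pn; exists [set u; v].
  exact/subsetP.
apply/forall_inP => y yS; apply/forall_inP => z zS.
by rewrite (connect_trans (connect_u y yS)) // r_sym connect_u.
Qed.

Lemma subtree_interior_edges1E e u v S : is_tree e -> e u v ->
  subtree e S && (interior_edges S == [set [set u; v]]) =
  ([set u; v] \in interior_edges S) && (S \subset double_star e u v).
Proof.
move=> tree euv; apply/andP/andP => [[st /eqP IS]|[fI sub]].
  split; first by rewrite IS set11.
  have /and3P [_ /subsetP Se _] := st.
  apply/subsetP => E ES; rewrite inE Se //=.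
  apply: contraR (unique_interior_edge_meets st IS ES).
  rewrite negb_or => /andP [uE vE]; rewrite disjoint_sym disjoints_subset.
  by apply/subsetP => w; rewrite !inE => /orP [] /eqP ->.
have fS := subsetP (interior_edges_sub S) _ fI.
split; first exact: subtree_double_star fS sub.
apply/eqP/setP => E; rewrite in_set1; have [->//|Ef] := eqVneq E [set u; v].
apply/negbTE; have [ES|] := boolP (E \in S).
  exact: double_star_leaf tree euv sub ES Ef.
by apply: contraNN; apply: (subsetP (interior_edges_sub S)).
Qed.

Local Open Scope ring_scope.

Lemma sum_sign_interior_double_star e u v a b :
  [set u; v] \in edgeset e ->
  a \in double_star e u v -> v \notin a -> b \in double_star e u v -> u \notin b ->
  \sum_(S | ([set u; v] \in interior_edges S) && (S \subset double_star e u v))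
    (-1 : int) ^+ #|S| = -1.
Proof.
move=> fe ads va bds ub; set f := [set u; v].
have af : a != f by apply: contraNneq va => ->; rewrite set22.
have bf : b != f by apply: contraNneq ub => ->; rewrite set21.
pose P S := (f \in S) && (S \subset double_star e u v).
have P_toggle E S : E \in double_star e u v -> E != f -> P (toggle E S) = P S.
  by move=> Eds Ef; rewrite /P mem_toggle_neq 1?eq_sym // subset_toggle.
rewrite (eq_bigl (fun S => [&& P S, deg S u != 1%N & deg S v != 1%N])); last first.
  move=> S; rewrite interior_edges2 /P.
  by case: (deg S u != 1%N); case: (deg S v != 1%N); rewrite ?andbT ?andbF.
rewrite (sum_sign_toggle2 (a := a) (b := b)) => [|S|S|S|S]; last 4 first.
- exact: P_toggle.
- by rewrite deg_toggle.
- exact: P_toggle.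
- by rewrite deg_toggle.
rewrite (big_pred1 [set f]) ?cards1 ?expr1 // => S; rewrite !negbK.
apply/and3P/eqP => [[/andP [fS /subsetP Sds] /eqP deg_u /eqP deg_v]|->].
  apply/eqP; rewrite eqEsubset sub1set fS andbT; apply/subsetP => E ES.
  rewrite in_set1; have := Sds E ES; rewrite inE => /andP [_ /orP [uE|vE]].
    by rewrite (deg1_edge_eq deg_u fS ES) ?set21.
  by rewrite (deg1_edge_eq deg_v fS ES) ?set22.
have deg_f w : w \in f -> deg [set f] w == 1%N.
  move=> wf; apply/cards1P; exists f; apply/setP => E.
  by rewrite !inE andb_idr // => /eqP ->.
rewrite /P set11 sub1set inE fe set21 !deg_f ?set21 ?set22 //.
Qed.

Lemma sum_sign_subtrees_interior_edge e f :
  is_tree e -> f \in interior_edges (edgeset e) ->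
  \sum_(S | subtree e S && (interior_edges S == [set f])) (-1 : int) ^+ #|S| = -1.
Proof.
move=> tree fI; have [_ irr _ _] := tree.
have fe := subsetP (interior_edges_sub _) _ fI.
have [u [v [euv fuv]]] := edgesetP _ _ fe; rewrite fuv in fe fI *.
have uv : u != v by apply: contraTneq euv => ->; rewrite irr.
move: fI; rewrite interior_edges2 => /and3P [_ deg_u deg_v].
have [a ae /andP [af ua]] := deg_neq1_other_edge fe (set21 u v) deg_u.
have [b be /andP [bf vb]] := deg_neq1_other_edge fe (set22 u v) deg_v.
have va : v \notin a by apply: contraNN af => va; rewrite (edgeset_eq2 ae ua va uv).
have ub : u \notin b by apply: contraNN bf => ub; rewrite (edgeset_eq2 be ub vb uv).
rewrite (eq_bigl _ _ (fun S => subtree_interior_edges1E S tree euv)).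
apply: (sum_sign_interior_double_star (a := a) (b := b)) => //.
  by rewrite inE ae ua.
by rewrite inE be vb orbT.
Qed.

End Subtrees.

Lemma cards1_odflt_unset1 (T : finType) (A : {set T}) x0 x :
  (#|A| == 1%N) && (odflt x0 (unset1 A) == x) = (A == [set x]).
Proof.
apply/andP/eqP => [[/cards1P [y ->]]|->]; last by rewrite cards1 set1K.
by rewrite set1K => /= /eqP ->.
Qed.

Local Open Scope ring_scope.

Theorem theorem4p7 (V : finType) (e : rel V) (m : nat) :
  is_tree e ->
  #|interior_edges (edgeset e)| = m ->
  \sum_(S : {set {set V}} | subtree e S && (#|interior_edges S| == 1%N))
      (-1 : int) ^+ #|S| = - (m%:Z).
Proof.
move=> tree <-.
pose interior_edge (S : {set {set V}}) := odflt set0 (unset1 (interior_edges S)).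
rewrite (partition_big interior_edge (mem (interior_edges (edgeset e)))); last first.
  move=> S /andP [/and3P [_ Se _] /cards1P [f IS]]; rewrite /interior_edge IS set1K /=.
  by apply: (interior_edges_subset Se); rewrite IS set11.
rewrite (eq_bigr (fun=> -1)) => [|f fI]; first by rewrite sumr_const mulNrn natz.
rewrite -[RHS](sum_sign_subtrees_interior_edge tree fI); apply: eq_bigl => S.
by rewrite -andbA cards1_odflt_unset1.
Qed.
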